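(* Let $B, C_{in}, C_{out}, W_{in}, H_{in}, W_{out}, H_{out}$ be positive integers, and let $f:\mathbb{R}^{B\times C_{in}\times W_{in}\times H_{in}}\to\mathbb{R}^{B\times C_{out}\times W_{out}\times H_{out}}$ be the operation on an intermediate edge, of the form $f=\mathrm{BN}\circ K\circ\rho$, where: (i) $\rho$ is either the identity or the elementwise ReLU $t\mapsto\max(t,0)$; (ii) $K$ is either a 2D convolution without bias, $K(\mathbf{X})_{b,c_{out},w,h}=\sum_{c_{in}}\sum_{p,q}W_{c_{out},c_{in},p,q}\,\mathbf{X}_{b,c_{in},w+p,h+q}$ for a fixed filter $W$, or a max pooling or average pooling layer; (iii) $\mathrm{BN}$ is batch normalization with batch statistics: writing $d$ for the spatial index ranging over $D=W_{out}H_{out}$ positions, for input $\mathbf{Y}$ one sets $\mu_c=\frac{1}{BD}\sum_{b,d}\mathbf{Y}_{b,c,d}$, $\sigma_c^2=\frac{1}{BD}\sum_{b,d}(\mathbf{Y}_{b,c,d}-\mu_c)^2$, and $\mathrm{BN}(\mathbf{Y})_{b,c,d}=\gamma_c\frac{\mathbf{Y}_{b,c,d}-\mu_c}{\sqrt{\sigma_c^2}}+\beta_c$ with fixed parameters $\gamma_c,\beta_c\in\mathbb{R}$. Let $\mathbf{X}$ be an input at which $f$ is differentiable and for which $\sigma_c^2>0$ for all $c$, and let $L$ be any differentiable scalar function of the output $f(\mathbf{X})$ (e.g. a training loss depending on $\mathbf{X}$ only through this edge). Then the cost passed back through this edge vanishes: $$\sum_{b,c,w,h}\frac{\partial L}{\partial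 \mathbf{X}_{b,c,w,h}}\,\mathbf{X}_{b,c,w,h}=\Big\langle Df(\mathbf{X})^{\top}\frac{\partial L}{\partial f(\mathbf{X})},\,\mathbf{X}\Big\rangle=0.$$
   Context: In cell-based differentiable neural architecture search, a cell is a directed acyclic graph whose nodes are feature maps (tensors indexed by batch $b$, channel $c$, and spatial positions) and whose edges carry operations. An intermediate edge is an edge between two intermediate nodes of the cell. The ''cost'' of an edge with output feature map $\mathbf{X}$ is $\sum \frac{\partial L}{\partial \mathbf{X}}\odot \mathbf{X}$ (sum over all entries), and the claim concerns the part of the cost of a preceding edge that is back-propagated through an intermediate edge whose input is $\mathbf{X}$. The operation on the intermediate edge is assumed to be one of the non-skip candidates described (ReLU–convolution–BN or pooling–BN). *)

From HB Require Import structures.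
From mathcomp Require Import all_boot all_order all_algebra.
From mathcomp Require Import all_classical all_reals all_analysis.
Set Implicit Arguments. Unset Strict Implicit. Unset Printing Implicit Defensive.
Import Order.TTheory GRing.Theory Num.Theory.
Import numFieldNormedType.Exports.
Local Open Scope ring_scope.

Section Tensors.
Variable R : realType.

Definition idx (B C W H : nat) := ('I_B * 'I_C * 'I_W * 'I_H)%type.

(* 4-tensors, stored as row vectors indexed by (an enumeration of) idx, so that
   they carry MathComp-Analysis' normed-module structure (needed for 'd, 'D). *)
Definition tensor (B C W H : nat) := 'rV[R]_(#|{: idx B C W H}|).

Definition tget B C W H (X : tensor B C W H) b c w h : R :=
  X ord0 (enum_rank ((b, c, w, h) : idx B C W H)).

Definition tmk B C W H (F : 'I_B -> 'I_C -> 'I_W -> 'I_H -> R) : tensor B C W H :=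
  \row_j (let: (b, c, w, h) := enum_val j in F b c w h).

Definition tunit B C W H b c w h : tensor B C W H :=
  tmk (fun b' c' w' h' => if (b', c', w', h') == (b, c, w, h) then 1 else 0).

Definition tgetz B C W H (X : tensor B C W H) b c (i j : nat) : R :=
  match insub i, insub j with
  | Some w, Some h => tget X b c w h
  | _, _ => 0
  end.

Definition relu (t : R) : R := Num.max t 0.
Definition rho_op (use_relu : bool) B C W H (X : tensor B C W H) : tensor B C W H :=
  if use_relu then tmk (fun b c w h => relu (tget X b c w h)) else X.

(* (ii) 2D convolution without bias, filter Wt of size kP x kQ:
   K(X)_{b,co,w,h} = sum_ci sum_{p<kP,q<kQ} Wt co ci p q * X_{b,ci,w+p,h+q}
   (entries with w+p or h+q out of range are read as 0). *)
Definition conv2d B Cin Win Hin Cout Wout Hout (kP kQ : nat)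
  (Wt : 'I_Cout -> 'I_Cin -> 'I_kP -> 'I_kQ -> R)
  (X : tensor B Cin Win Hin) : tensor B Cout Wout Hout :=
  tmk (fun b co w h =>
    \sum_(ci < Cin) \sum_(p < kP) \sum_(q < kQ)
      Wt co ci p q * tgetz X b ci (w + p)%N (h + q)%N).

Definition windows Win Hin Wout Hout := 'I_Wout -> 'I_Hout -> {set ('I_Win * 'I_Hin)}.

Definition maxpool B Cin Win Hin Cout Wout Hout (e : Cout = Cin)
  (S : windows Win Hin Wout Hout) (X : tensor B Cin Win Hin) : tensor B Cout Wout Hout :=
  tmk (fun b c w h =>
    let c' := cast_ord e c in
    match [pick i in S w h] with
    | Some i0 => \big[Num.max/tget X b c' i0.1 i0.2]_(i in S w h) tget X b c' i.1 i.2
    | None => 0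
    end).

Definition avgpool B Cin Win Hin Cout Wout Hout (e : Cout = Cin)
  (S : windows Win Hin Wout Hout) (X : tensor B Cin Win Hin) : tensor B Cout Wout Hout :=
  tmk (fun b c w h =>
    (#|S w h|%:R)^-1 * \sum_(i in S w h) tget X b (cast_ord e c) i.1 i.2).

Definition is_conv_or_pool B Cin Win Hin Cout Wout Hout
  (K : tensor B Cin Win Hin -> tensor B Cout Wout Hout) : Prop :=
  (exists kP kQ (Wt : 'I_Cout -> 'I_Cin -> 'I_kP -> 'I_kQ -> R), K = @conv2d B Cin Win Hin Cout Wout Hout kP kQ Wt)
  \/ (exists (e : Cout = Cin) (S : windows Win Hin Wout Hout), K = maxpool e S)
  \/ (exists (e : Cout = Cin) (S : windows Win Hin Wout Hout), K = avgpool e S).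

Definition bn_mean B C W H (Y : tensor B C W H) (c : 'I_C) : R :=
  (B * W * H)%N%:R^-1 * \sum_(b < B) \sum_(w < W) \sum_(h < H) tget Y b c w h.

Definition bn_var B C W H (Y : tensor B C W H) (c : 'I_C) : R :=
  (B * W * H)%N%:R^-1 *
    \sum_(b < B) \sum_(w < W) \sum_(h < H) (tget Y b c w h - bn_mean Y c) ^+ 2.

Definition batchnorm B C W H (gamma beta : 'I_C -> R) (Y : tensor B C W H)
  : tensor B C W H :=
  tmk (fun b c w h =>
    gamma c * ((tget Y b c w h - bn_mean Y c) / Num.sqrt (bn_var Y c)) + beta c).

End Tensors.

From HB Require Import structures.
From mathcomp Require Import all_boot all_order all_algebra.
From mathcomp Require Import all_classical all_reals all_analysis.
Set Implicit Arguments. Unset Strict Implicit. Unset Printing Implicit Defensive.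
Import Order.TTheory GRing.Theory Num.Theory.
Import numFieldNormedType.Exports.
Local Open Scope ring_scope.

(* ReLU, convolution and pooling are positively homogeneous of degree one, and
   batch normalization cancels any positive factor, so f (s X) = f X for s > 0.
   Hence t |-> L (f ((1 + t) X)) is constant near 0 and the derivative of L o f
   at X in the direction X vanishes (Euler's identity for degree 0).  Expanding
   X in the coordinate tensors and using linearity of the differential, that
   derivative is exactly the sum of the partial derivatives weighted by the
   entries of X. *)

Section TensorEntries.
Variables (R : realType) (B C W H : nat).
Implicit Types (X Y : tensor R B C W H).

Lemma tget_tmk (F : 'I_B -> 'I_C -> 'I_W -> 'I_H -> R) b c w h :
  tget (tmk F) b c w h = F b c w h.
Proof. by rewrite /tget /tmk mxE enum_rankK. Qed.

Lemma tensorP X Y : (forall b c w h, tget X b c w h = tget Y b c w h) -> X = Y.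
Proof.
move=> eqXY; apply/rowP => j; rewrite -(enum_valK j).
by case: (enum_val j) => [[[b c] w] h]; apply: eqXY.
Qed.

Lemma tgetZ (s : R) X b c w h : tget (s *: X) b c w h = s * tget X b c w h.
Proof. by rewrite /tget mxE. Qed.

Lemma tgetzZ (s : R) X b c i j : tgetz (s *: X) b c i j = s * tgetz X b c i j.
Proof.
rewrite /tgetz; case: insub => [w|]; last by rewrite mulr0.
by case: insub => [h|]; rewrite ?tgetZ ?mulr0.
Qed.

Lemma tunitE b c w h : tunit R b c w h = 'e_(enum_rank ((b, c, w, h) : idx B C W H)).
Proof.
apply/rowP => j; rewrite !mxE -(enum_valK j) enum_rankK.
case: (enum_val j) => [[[b' c'] w'] h'].
by rewrite eqxx (inj_eq enum_rank_inj); case: eqP.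
Qed.

Lemma tensor_sum_tunit X :
  \sum_(b < B) \sum_(c < C) \sum_(w < W) \sum_(h < H)
     tget X b c w h *: tunit R b c w h = X.
Proof.
rewrite [RHS]row_sum_delta (reindex (@enum_rank _)) /=; last first.
  by exists enum_val => j _; rewrite ?enum_rankK ?enum_valK.
rewrite !pair_bigA; apply: eq_bigr => -[[[b c] w] h] _.
by rewrite tunitE.
Qed.

End TensorEntries.

Section ScalingLayers.
Variables (R : realType) (B Cin Win Hin Cout Wout Hout : nat).
Implicit Types (s : R) (X : tensor R B Cin Win Hin).

Lemma relu_pM s t : 0 <= s -> relu (s * t) = s * relu t.
Proof. by move=> s_ge0; rewrite /relu maxr_pMr // mulr0. Qed.

Lemma rho_op_pZ u s X : 0 <= s -> rho_op u (s *: X) = s *: rho_op u X.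
Proof.
move=> s_ge0; case: u => //=; apply: tensorP => b c w h.
by rewrite tgetZ !tget_tmk tgetZ relu_pM.
Qed.

Lemma conv2dZ kP kQ (Wt : 'I_Cout -> 'I_Cin -> 'I_kP -> 'I_kQ -> R) s X :
  conv2d Wout Hout Wt (s *: X) = s *: conv2d Wout Hout Wt X.
Proof.
apply: tensorP => b c w h; rewrite tgetZ !tget_tmk !mulr_sumr.
apply: eq_bigr => ci _; rewrite mulr_sumr; apply: eq_bigr => p _.
by rewrite mulr_sumr; apply: eq_bigr => q _; rewrite tgetzZ mulrCA.
Qed.

Lemma maxpool_pZ (e : Cout = Cin) (S : windows Win Hin Wout Hout) s X :
  0 <= s -> maxpool e S (s *: X) = s *: maxpool e S X.
Proof.
move=> s_ge0; apply: tensorP => b c w h; rewrite tgetZ !tget_tmk.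
case: pickP => [i0 _|_]; last by rewrite mulr0.
rewrite /= tgetZ; under eq_bigr => i _ do rewrite tgetZ.
by apply/esym/(big_morph (fun x => s * x)) => // x y; rewrite maxr_pMr.
Qed.

Lemma avgpoolZ (e : Cout = Cin) (S : windows Win Hin Wout Hout) s X :
  avgpool e S (s *: X) = s *: avgpool e S X.
Proof.
apply: tensorP => b c w h; rewrite tgetZ !tget_tmk mulrCA; congr (_ * _).
by rewrite mulr_sumr; apply: eq_bigr => i _; rewrite tgetZ.
Qed.

Lemma conv_or_pool_pZ (K : tensor R B Cin Win Hin -> tensor R B Cout Wout Hout) s X :
  is_conv_or_pool K -> 0 <= s -> K (s *: X) = s *: K X.
Proof.
move=> [[kP [kQ [Wt ->]]]|[[e [S ->]]|[e [S ->]]]] s_ge0.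
- exact: conv2dZ.
- exact: maxpool_pZ.
- exact: avgpoolZ.
Qed.

End ScalingLayers.

Section BatchNormScaleInvariance.
Variables (R : realType) (B C W H : nat).
Implicit Types (s : R) (Y : tensor R B C W H).

Lemma bn_meanZ s Y c : bn_mean (s *: Y) c = s * bn_mean Y c.
Proof.
rewrite /bn_mean mulrCA; congr (_ * _).
rewrite mulr_sumr; apply: eq_bigr => b _.
rewrite !mulr_sumr; apply: eq_bigr => w _; rewrite mulr_sumr.
by apply: eq_bigr => h _; rewrite tgetZ.
Qed.

Lemma bn_varZ s Y c : bn_var (s *: Y) c = s ^+ 2 * bn_var Y c.
Proof.
rewrite /bn_var mulrCA; congr (_ * _).
rewrite mulr_sumr; apply: eq_bigr => b _.
rewrite !mulr_sumr; apply: eq_bigr => w _; rewrite mulr_sumr.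
by apply: eq_bigr => h _; rewrite tgetZ bn_meanZ -mulrBr exprMn.
Qed.

Lemma batchnorm_scale_invariant (gamma beta : 'I_C -> R) s Y :
  0 < s -> batchnorm gamma beta (s *: Y) = batchnorm gamma beta Y.
Proof.
move=> s_gt0; apply: tensorP => b c w h; rewrite !tget_tmk tgetZ bn_meanZ bn_varZ.
rewrite sqrtrM ?sqr_ge0 // sqrtr_sqr gtr0_norm // -mulrBr invfM mulrACA.
by rewrite mulfV ?gt_eqF // mul1r.
Qed.

End BatchNormScaleInvariance.

Section EulerIdentity.
Variable R : realType.

Lemma derive_along_self_eq0 (V W : normedModType R) (g : V -> W) x :
  (forall s, 0 < s -> g (s *: x) = g x) -> 'D_x g x = 0.
Proof.
move=> g_inv; apply: cvg_lim => //.
apply: cvg_trans (near_eq_cvg _) (cvg_cst 0); near=> h.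
have h_gt : 0 < 1 + h.
  have : `|h| < 1 by near: h; exact: dnbhs0_lt.
  by rewrite ltr_norml => /andP[h_gt _]; rewrite -ltrBlDl sub0r.
have -> : (g \o shift x) (h *: x) = g ((1 + h) *: x).
  by rewrite /= scalerDl scale1r addrC.
by rewrite g_inv // subrr scaler0.
Unshelve. all: by end_near.
Qed.

Lemma sum_tunit_derive B C W H (V : normedModType R) (g : tensor R B C W H -> V) X :
  differentiable g X ->
  \sum_(b < B) \sum_(c < C) \sum_(w < W) \sum_(h < H)
     tget X b c w h *: 'D_(tunit R b c w h) g X = 'D_X g X.
Proof.
move=> dg; rewrite deriveE //; set dgX := 'd g X.
rewrite -[in RHS](tensor_sum_tunit X) linear_sum.
apply: eq_bigr => b _; rewrite linear_sum; apply: eq_bigr => c _.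
rewrite linear_sum; apply: eq_bigr => w _; rewrite linear_sum.
by apply: eq_bigr => h _; rewrite linearZ deriveE.
Qed.

End EulerIdentity.

Theorem theorem1 (R : realType) (B Cin Win Hin Cout Wout Hout : nat)
  (hB : (0 < B)%N) (hCin : (0 < Cin)%N) (hWin : (0 < Win)%N) (hHin : (0 < Hin)%N)
  (hCout : (0 < Cout)%N) (hWout : (0 < Wout)%N) (hHout : (0 < Hout)%N)
  (use_relu : bool)
  (K : tensor R B Cin Win Hin -> tensor R B Cout Wout Hout)
  (hK : is_conv_or_pool K)
  (gamma beta : 'I_Cout -> R)
  (L : tensor R B Cout Wout Hout -> R)
  (X : tensor R B Cin Win Hin) :
  let f := fun Z : tensor R B Cin Win Hin =>
             batchnorm gamma beta (K (rho_op use_relu Z)) in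
  differentiable f X ->
  (forall c : 'I_Cout, 0 < bn_var (K (rho_op use_relu X)) c) ->
  differentiable L (f X) ->
  \sum_(b < B) \sum_(c < Cin) \sum_(w < Win) \sum_(h < Hin)
     'D_(tunit R b c w h) (L \o f) X * tget X b c w h = 0.
Proof.
move=> f df _ dL.
have f_pZ s : 0 < s -> f (s *: X) = f X.
  move=> s_gt0; rewrite /f rho_op_pZ ?ltW // conv_or_pool_pZ ?ltW //.
  by rewrite batchnorm_scale_invariant.
have DXLf : 'D_X (L \o f) X = 0.
  by apply: derive_along_self_eq0 => s s_gt0; rewrite /= f_pZ.
rewrite -[in RHS]DXLf -sum_tunit_derive; last exact: differentiable_comp.
apply: eq_bigr => b _; apply: eq_bigr => c _; apply: eq_bigr => w _.
by apply: eq_bigr => h _; rewrite mulrC.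
Qed.
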